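(* For any group $B$ and any integer $p\ge 2$, $$cw(B\wr C_p)\le \max(1,cw(B)).$$
   Context: $B\wr C_p$ is the permutational wreath product $B^p\rtimes C_p$, where the cyclic group $C_p$ acts on $\{1,\dots,p\}$ by the shift $(1,2,\dots,p)$. The commutator length of $g\in G'$ is the least $n$ such that $g$ is a product of $n$ commutators; the commutator width $cw(G)$ is the maximum of commutator lengths over elements of the derived subgroup $G'$. *)

From mathcomp Require Import all_boot all_algebra.
Set Implicit Arguments. Unset Strict Implicit. Unset Printing Implicit Defensive.
Import GRing.Theory.

Record group := Group {
  gcar :> Type;
  gmul : gcar -> gcar -> gcar;
  ginv : gcar -> gcar;
  gone : gcar;
  gmulA : forall x y z, gmul x (gmul y z) = gmul (gmul x y) z;
  gmul1 : forall x, gmul gone x = x;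
  gmulV : forall x, gmul (ginv x) x = gone
}.

Section Commutators.
Variables (T : Type) (mul : T -> T -> T) (inv : T -> T) (one : T).

Definition comm (x y : T) : T := mul (mul (inv x) (inv y)) (mul x y).

Inductive in_derived : T -> Prop :=
| der_comm x y : in_derived (comm x y)
| der_one : in_derived one
| der_mul x y : in_derived x -> in_derived y -> in_derived (mul x y)
| der_inv x : in_derived x -> in_derived (inv x).

Definition prod_comms (l : seq (T * T)) : T :=
  foldr (fun xy acc => mul (comm xy.1 xy.2) acc) one l.

Definition cw_le (n : nat) : Prop :=
  forall g, in_derived g -> exists l : seq (T * T), size l <= n /\ g = prod_comms l.
End Commutators.

(* The permutational wreath product B wr C_p = B^p x| C_p, C_p = Z/pZ acting on
   the coordinates 'Z_p by the shift i |-> i + a (use only with 1 < p). *)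
Section Wreath.
Variables (B : group) (p : nat).
Definition wr_car : Type := (('Z_p -> B) * 'Z_p)%type.
Definition wr_mul (x y : wr_car) : wr_car :=
  (fun i => gmul (x.1 i) (y.1 (i - x.2)%R), (x.2 + y.2)%R).
Definition wr_inv (x : wr_car) : wr_car :=
  (fun i => ginv (x.1 (i + x.2)%R), (- x.2)%R).
Definition wr_one : wr_car := (fun _ => gone B, 0%R).
End Wreath.

Definition cw_le_group (B : group) (n : nat) :=
  cw_le (@gmul B) (@ginv B) (gone B) n.
Definition cw_le_wreath (B : group) (p : nat) (n : nat) :=
  cw_le (@wr_mul B p) (@wr_inv B p) (wr_one B p) n.

(* The coordinate product (f, s) |-> f 0 * ... * f (p-1) is a homomorphism from
   B wr C_p to B modulo B' (the shift s only permutes the factors), so every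
   element of the derived subgroup is (f, 0) with f 0 * ... * f (p-1) in B', say
   equal to [a, b] * c with c a product of n - 1 commutators (a = b = 1 if
   n = 0).  Dividing the last coordinate of f by c gives (f, 0) = (t, 0) * (c
   placed at the last coordinate), where the second factor is a product of
   n - 1 commutators of elements supported on that coordinate.  As
   t 0 * ... * t (p-1) = [a, b], we get (t, 0) = [X, Y] with
   X = (i |-> a * t 0 * ... * t (i-1), 0) and Y = (b placed at coordinate 0, 1). *)

From HB Require Import structures.
From mathcomp Require Import all_boot all_algebra.
From Stdlib Require Import FunctionalExtensionality.
Set Implicit Arguments. Unset Strict Implicit. Unset Printing Implicit Defensive.
Import GRing.Theory.

Declare Scope grp_scope.
Local Notation "x * y" := (gmul x y) : grp_scope.
Local Notation "x ^-1" := (ginv x) : grp_scope.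
Local Notation "1" := (gone _) : grp_scope.
Local Notation "[~ x , y ]" := (comm (@gmul _) (@ginv _) x y) : grp_scope.
Local Open Scope grp_scope.

Lemma prod_comms_morph (T T' : Type) (mul : T -> T -> T) (inv : T -> T) (one : T)
    (mul' : T' -> T' -> T') (inv' : T' -> T') (one' : T') (phi : T -> T') :
    {morph phi : x y / mul x y >-> mul' x y} -> {morph phi : x / inv x >-> inv' x} ->
    phi one = one' ->
  forall l, phi (prod_comms mul inv one l)
            = prod_comms mul' inv' one' [seq (phi xy.1, phi xy.2) | xy <- l].
Proof. by move=> phiM phiV phi1; elim=> //= xy l <-; rewrite /comm !phiM !phiV. Qed.

Section GroupFacts.
Variable B : group.
Implicit Types x y : B.

Lemma gmulKg x y : x^-1 * (x * y) = y.
Proof. by rewrite gmulA gmulV gmul1. Qed.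

Lemma gmulgV x : x * x^-1 = 1.
Proof. by rewrite -[x * x^-1]gmul1 -{1}(gmulV x^-1) -gmulA (gmulKg x) gmulV. Qed.

Lemma gmulg1 x : x * 1 = x.
Proof. by rewrite -(gmulV x) gmulA gmulgV gmul1. Qed.

Lemma gmulKVg x y : x * (x^-1 * y) = y.
Proof. by rewrite gmulA gmulgV gmul1. Qed.

Lemma gmulg1_eq x y : x * y = 1 -> x^-1 = y.
Proof. by move=> xy1; rewrite -(gmulKg x y) xy1 gmulg1. Qed.

Lemma ginvgK x : x^-1^-1 = x.
Proof. by apply: gmulg1_eq; rewrite gmulV. Qed.

Lemma ginvgM x y : (x * y)^-1 = y^-1 * x^-1.
Proof. by apply: gmulg1_eq; rewrite -gmulA gmulKVg gmulgV. Qed.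

Lemma ginvg1 : (1 : B)^-1 = 1.
Proof. by apply: gmulg1_eq; rewrite gmul1. Qed.

Lemma comm11 : [~ 1, 1] = 1 :> B.
Proof. by rewrite /comm ginvg1 !gmul1. Qed.

End GroupFacts.

HB.instance Definition _ (B : group) :=
  Monoid.isLaw.Build B (gone B) (@gmul B) (@gmulA B) (@gmul1 B) (@gmulg1 B).

Local Notation "\prod_ ( i <- r ) F" := (\big[@gmul _/gone _]_(i <- r) F) : grp_scope.
Local Notation "\prod_ ( m <= i < n ) F" := (\big[@gmul _/gone _]_(m <= i < n) F) : grp_scope.

Definition congr_der (B : group) (a b : B) :=
  in_derived (@gmul B) (@ginv B) (gone B) (a * b^-1).
Local Notation "a ≡ b" := (congr_der a b) (at level 70).

Section DerivedCongruence.
Variable B : group.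
Implicit Types a b c d : B.
Local Notation derived := (in_derived (@gmul B) (@ginv B) (gone B)).

Lemma derived_conj a d : derived d -> derived (a * d * a^-1).
Proof.
move=> Dd; have -> : a * d * a^-1 = [~ a^-1, d^-1] * d.
  by rewrite /comm !ginvgK -!gmulA gmulV gmulg1.
exact/der_mul/Dd/der_comm.
Qed.

Lemma congr_der_refl a : a ≡ a.
Proof. by rewrite /congr_der gmulgV; apply: der_one. Qed.

Lemma congr_der_trans a b c : a ≡ b -> b ≡ c -> a ≡ c.
Proof. by move=> Dab Dbc; have := der_mul Dab Dbc; rewrite -gmulA (gmulKg b). Qed.

Lemma congr_derM a a' b b' : a ≡ a' -> b ≡ b' -> a * b ≡ a' * b'.
Proof.
move=> Da Db; rewrite /congr_der.
have -> : (a * b) * (a' * b')^-1 = a * (b * b'^-1) * a^-1 * (a * a'^-1).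
  by rewrite ginvgM -!gmulA (gmulKg a).
exact: der_mul (derived_conj _ Db) Da.
Qed.

Lemma congr_derV a b : a ≡ b -> a^-1 ≡ b^-1.
Proof.
move=> Dab; have := derived_conj a^-1 (der_inv Dab).
by rewrite /congr_der ginvgM !ginvgK -!gmulA gmulV gmulg1.
Qed.

Lemma congr_der_mulC a b : a * b ≡ b * a.
Proof.
have := der_comm (@gmul B) (@ginv B) (gone B) a^-1 b^-1.
by rewrite /congr_der /comm ginvgM !ginvgK.
Qed.

Lemma derived_congr a b : a ≡ b -> derived b -> derived a.
Proof. by move=> Dab Db; have := der_mul Dab Db; rewrite -gmulA gmulV gmulg1. Qed.

Lemma congr_der_big_perm (I : eqType) (r1 r2 : seq I) (F : I -> B) :
  perm_eq r1 r2 -> \prod_(i <- r1) F i ≡ \prod_(i <- r2) F i.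
Proof.
move=> r12; pose P s := \prod_(i <- r1) F i ≡ \prod_(i <- s) F i.
apply: (@catCA_perm_ind _ P _ r1 r2 r12 (congr_der_refl _)) => s1 s2 s3 Ds.
apply: congr_der_trans Ds _; rewrite /P !big_cat /= !gmulA.
exact: congr_derM (congr_der_mulC _ _) (congr_der_refl _).
Qed.

Lemma congr_der_big_split (I : Type) (r : seq I) (F G : I -> B) :
  \prod_(i <- r) (F i * G i) ≡ \prod_(i <- r) F i * \prod_(i <- r) G i.
Proof.
elim: r => [|i r IH]; first by rewrite !big_nil gmul1; apply: congr_der_refl.
rewrite !big_cons; apply: congr_der_trans (congr_derM (congr_der_refl _) IH) _.
rewrite -!gmulA; apply: congr_derM (congr_der_refl _) _.
by rewrite !gmulA; apply: congr_derM (congr_der_mulC _ _) (congr_der_refl _).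
Qed.

Lemma congr_der_big_inv (I : Type) (r : seq I) (F : I -> B) :
  \prod_(i <- r) (F i)^-1 ≡ (\prod_(i <- r) F i)^-1.
Proof.
elim: r => [|i r IH]; first by rewrite !big_nil ginvg1; apply: congr_der_refl.
rewrite !big_cons ginvgM; apply: congr_der_trans (congr_derM (congr_der_refl _) IH) _.
exact: congr_der_mulC.
Qed.

Lemma prod_comms_cons_split (l : seq (B * B)) : exists a b l', size l' = (size l).-1 /\
  prod_comms (@gmul B) (@ginv B) (gone B) l
  = [~ a, b] * prod_comms (@gmul B) (@ginv B) (gone B) l'.
Proof.
case: l => [|[a b] l]; last by exists a, b, l.
by exists 1, 1, [::]; rewrite comm11 gmul1.
Qed.

End DerivedCongruence.

Section ZpFacts.
Variable q : nat.
Local Notation p := q.+2.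

Lemma Zp_enumE : [seq inZp j | j <- index_iota 0 p] = enum 'Z_p.
Proof. by rewrite /index_iota subn0 -val_enum_ord -map_comp (eq_map (@valZpK _)) map_id. Qed.

Lemma inZp_max : inZp q.+1 = ord_max :> 'Z_p.
Proof. by apply: val_inj; rewrite /= modn_small. Qed.

Lemma inZp_neq_max j : j < q.+1 -> inZp j != ord_max :> 'Z_p.
Proof. by move=> lt_j; rewrite -(inj_eq val_inj) /= modn_small ?ltn_eqF // ltnW. Qed.

Lemma val_Zp_add1 (i : 'Z_p) : i != ord_max -> val (i + 1)%R = (val i).+1.
Proof.
move=> i_max; rewrite /= (@modn_small 1) // addn1 modn_small // ltnS ltn_neqAle.
by rewrite -ltnS ltn_ord andbT; apply: contra i_max => /eqP i_max; apply/eqP/val_inj.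
Qed.

Lemma Zp_max_add1 : (ord_max + 1 = 0 :> 'Z_p)%R.
Proof. by apply: val_inj; rewrite /= (@modn_small 1) // addn1 modnn. Qed.

End ZpFacts.

Section WreathProduct.
Variables (B : group) (q : nat).
Local Notation p := q.+2.
Local Notation Z := 'Z_p.
Local Notation W := (wr_car B p).
Local Notation derived := (in_derived (@gmul B) (@ginv B) (gone B)).
Local Notation wr_derived := (in_derived (@wr_mul B p) (@wr_inv B p) (wr_one B p)).
Implicit Types (f t : Z -> B) (x y : W).

Definition prefix_prod f k := \prod_(0 <= j < k) f (inZp j).
Definition coord_prod f := prefix_prod f p.

Lemma prefix_prodS f k : prefix_prod f k.+1 = prefix_prod f k * f (inZp k).
Proof. by rewrite /prefix_prod big_nat_recr. Qed.

Lemma coord_prodE f : coord_prod f = \prod_(i <- enum Z) f i.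
Proof. by rewrite -Zp_enumE big_map. Qed.

Lemma coord_prod_shift f (a : Z) : coord_prod (fun i => f (i + a)%R) ≡ coord_prod f.
Proof.
rewrite !coord_prodE -(big_map (fun i => i + a)%R xpredT); apply: congr_der_big_perm.
apply: uniq_perm; rewrite ?enum_uniq //.
  by rewrite map_inj_uniq ?enum_uniq // => i j /addIr.
by move=> i; rewrite mem_enum; apply/mapP; exists (i - a)%R; rewrite ?mem_enum ?subrK.
Qed.

Lemma coord_prodM x y : coord_prod (wr_mul x y).1 ≡ coord_prod x.1 * coord_prod y.1.
Proof.
apply: congr_der_trans (congr_der_big_split _ _ _) _.
exact: congr_derM (congr_der_refl _) (coord_prod_shift _ _).
Qed.

Lemma coord_prodV x : coord_prod (wr_inv x).1 ≡ (coord_prod x.1)^-1.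
Proof.
apply: congr_der_trans (congr_der_big_inv _ _) _.
exact: congr_derV (coord_prod_shift _ _).
Qed.

Lemma coord_prod_comm x y :
  coord_prod (comm (@wr_mul B p) (@wr_inv B p) x y).1 ≡ [~ coord_prod x.1, coord_prod y.1].
Proof.
apply: congr_der_trans (coord_prodM _ _) _.
apply: congr_derM; apply: congr_der_trans (coord_prodM _ _) _.
  exact: congr_derM (coord_prodV _) (coord_prodV _).
exact: congr_der_refl.
Qed.

Lemma wr_derived_coord_prod g : wr_derived g -> g.2 = 0%R /\ derived (coord_prod g.1).
Proof.
elim=> [x y | | x y _ [x0 Dx] _ [y0 Dy] | x _ [x0 Dx]].
- split; first by rewrite /= addrACA !addNr addr0.
  exact: derived_congr (coord_prod_comm _ _) (der_comm _ _ _ _ _).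
- by split; rewrite // /coord_prod /prefix_prod big1_eq; apply: der_one.
- split; first by rewrite /= x0 y0 addr0.
  exact: derived_congr (coord_prodM _ _) (der_mul Dx Dy).
- split; first by rewrite /= x0 oppr0.
  exact: derived_congr (coord_prodV _) (der_inv Dx).
Qed.

Lemma comm_wr_shift1 (x y : Z -> B) :
  comm (@wr_mul B p) (@wr_inv B p) (x, 0%R) (y, 1%R)
  = (fun i => (x i)^-1 * (y (i + 1)%R)^-1 * (x (i + 1)%R * y (i + 1)%R), 0%R).
Proof.
rewrite /comm /wr_mul /wr_inv /=; congr pair; last by rewrite oppr0 !add0r addNr.
by apply: functional_extensionality => i; rewrite oppr0 !addr0 add0r subr0 opprK.
Qed.

Lemma wr_comm_of_coord_prod t a b :
  coord_prod t = [~ a, b] -> exists X Y, comm (@wr_mul B p) (@wr_inv B p) X Y = (t, 0%R).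
Proof.
move=> tab; exists ((fun i => a * prefix_prod t (val i)), 0%R).
exists ((fun i => if i == 0%R then b else 1), 1%R).
rewrite comm_wr_shift1; congr pair; apply: functional_extensionality => i.
have [-> | i_max] := eqVneq i ord_max.
  rewrite Zp_max_add1 eqxx /= {2}/prefix_prod big_nil gmulg1.
  move: tab; rewrite /coord_prod prefix_prodS inZp_max /comm -!gmulA => tab.
  by rewrite ginvgM -!gmulA -tab (gmulKg (prefix_prod t q.+1)).
have i1_nz : (i + 1)%R != 0%R by apply/eqP => /(congr1 val); rewrite val_Zp_add1.
rewrite (negbTE i1_nz) (val_Zp_add1 i_max) prefix_prodS valZpK ginvg1 !gmulg1 ginvgM.
by rewrite -!gmulA (gmulKg a) gmulKg.
Qed.

Definition wr_single (i0 : Z) (u : B) : W := (fun i => if i == i0 then u else 1, 0%R).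

Lemma wr_singleM i0 : {morph wr_single i0 : u v / u * v >-> wr_mul u v}.
Proof.
move=> u v; rewrite /wr_mul /=; congr pair; last by rewrite addr0.
by apply: functional_extensionality => i; rewrite subr0; case: eqP; rewrite ?gmul1.
Qed.

Lemma wr_singleV i0 : {morph wr_single i0 : u / u^-1 >-> wr_inv u}.
Proof.
move=> u; rewrite /wr_inv /=; congr pair; last by rewrite oppr0.
by apply: functional_extensionality => i; rewrite addr0; case: eqP; rewrite ?ginvg1.
Qed.

Lemma wr_single1 i0 : wr_single i0 1 = wr_one B p.
Proof. by congr pair; apply: functional_extensionality => i; case: eqP. Qed.

Lemma wr_single_prod_comms i0 l :
  wr_single i0 (prod_comms (@gmul B) (@ginv B) (gone B) l)
  = prod_comms (@wr_mul B p) (@wr_inv B p) (wr_one B p)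
      [seq (wr_single i0 uv.1, wr_single i0 uv.2) | uv <- l].
Proof. exact: prod_comms_morph (wr_singleM i0) (wr_singleV i0) (wr_single1 i0) l. Qed.

Definition mul_last f u := fun i => if i == ord_max then f i * u else f i.

Lemma coord_prod_mul_last f u : coord_prod (mul_last f u) = coord_prod f * u.
Proof.
rewrite /coord_prod !(prefix_prodS _ q.+1) {2}/mul_last inZp_max eqxx gmulA.
by congr (_ * _ * _); apply: eq_big_nat => j /andP [_ lt_j]; rewrite /mul_last ifN ?inZp_neq_max.
Qed.

Lemma wr_mul_last_single f u :
  wr_mul (mul_last f u^-1, 0%R) (wr_single ord_max u) = (f, 0%R).
Proof.
rewrite /wr_mul /=; congr pair; last by rewrite addr0.
apply: functional_extensionality => i; rewrite subr0 /mul_last.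
by case: eqP; rewrite ?gmulg1 // -gmulA gmulV gmulg1.
Qed.

End WreathProduct.

Theorem mainTheorem5 (B : group) (p : nat) (hp : 1 < p) (n : nat) :
  cw_le_group B n -> cw_le_wreath B p (maxn 1 n).
Proof.
case: p hp => [|[|q]] // _ cwB [f s] /wr_derived_coord_prod [/= -> Df].
have [l [size_l f_l]] := cwB _ Df.
have [a [b [l' [size_l' l_l']]]] := prod_comms_cons_split l.
set c := prod_comms _ _ _ l' in l_l'.
have t_ab : coord_prod (mul_last f c^-1) = [~ a, b].
  by rewrite coord_prod_mul_last f_l l_l' -gmulA gmulgV gmulg1.
have [X [Y XY]] := wr_comm_of_coord_prod t_ab.
exists ((X, Y) :: [seq (wr_single ord_max uv.1, wr_single ord_max uv.2) | uv <- l']); split.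
  rewrite /= size_map size_l'; case: (size l) size_l => [|k] k_n; first exact: leq_maxl.
  exact: leq_trans k_n (leq_maxr _ _).
by rewrite /= -wr_single_prod_comms XY wr_mul_last_single.
Qed.
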